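(* Let $A$ be an AUF algebra and let $M,N$ be coherent left $A$-modules. Then $\dim\mathrm{Hom}_{A,-}(M,N)<\infty$.
   Context: All algebras are associative $\mathbb C$-algebras, not necessarily unital. An idempotent is $e$ with $e^2=e$. An algebra $A$ is AUF if there is a family $(e_i)_{i\in\mathfrak I}$ of mutually orthogonal idempotents with $\dim e_iAe_j<\infty$ and $A=\sum_{i,j}e_iAe_j$. A left $A$-module $M$ is quasicoherent if $\xi\in A\xi$ for all $\xi\in M$, and coherent if moreover finitely generated. $\mathrm{Hom}_{A,-}(M,N)$ denotes the space of left $A$-module homomorphisms. *)

From HB Require Import structures.
From mathcomp Require Import all_boot all_order all_algebra.
From mathcomp.real_closed Require Import complex.
From mathcomp Require Import Rstruct.
Set Implicit Arguments. Unset Strict Implicit. Unset Printing Implicit Defensive.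
Import Order.TTheory GRing.Theory Num.Theory.
Local Open Scope ring_scope.

Definition CC : fieldType := (complex Rdefinitions.R : fieldType).

(* Associative C-algebras, not necessarily unital. *)
Record nuAlgebra := NuAlgebra {
  alg_carrier :> lmodType CC;
  amul : alg_carrier -> alg_carrier -> alg_carrier;
  amulA : forall x y z, amul x (amul y z) = amul (amul x y) z;
  amulDl : forall x y z, amul (x + y) z = amul x z + amul y z;
  amulDr : forall x y z, amul x (y + z) = amul x y + amul x z;
  amulZl : forall (c : CC) x y, amul (c *: x) y = c *: amul x y;
  amulZr : forall (c : CC) x y, amul x (c *: y) = c *: amul x y
}.

Record lmodule (A : nuAlgebra) := LModule {
  mod_carrier :> lmodType CC;
  act : A -> mod_carrier -> mod_carrier;
  actA : forall (a b : A) m, act (amul a b) m = act a (act b m);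
  actDl : forall (a b : A) m, act (a + b) m = act a m + act b m;
  actDr : forall (a : A) m n, act a (m + n) = act a m + act a n;
  actZl : forall (c : CC) (a : A) m, act (c *: a) m = c *: act a m;
  actZr : forall (c : CC) (a : A) m, act a (c *: m) = c *: act a m
}.

Definition finite_dim (V : lmodType CC) (S : V -> Prop) : Prop :=
  exists (n : nat) (v : 'I_n -> V),
    forall x, S x -> exists c : 'I_n -> CC, x = \sum_(k < n) c k *: v k.

Definition idempotent (A : nuAlgebra) (e : A) : Prop := amul e e = e.

Definition corner (A : nuAlgebra) (e f : A) (x : A) : Prop :=
  exists a : A, x = amul (amul e a) f.

Definition AUF (A : nuAlgebra) : Prop :=
  exists (I : Type) (e : I -> A),
    [/\ forall i, idempotent (e i),
        forall i j, i <> j -> amul (e i) (e j) = 0,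
        forall i j, finite_dim (corner (e i) (e j)) &
        forall x : A, exists (n : nat) (ij : 'I_n -> I * I) (y : 'I_n -> A),
          (forall k, corner (e (ij k).1) (e (ij k).2) (y k)) /\
          x = \sum_(k < n) y k].

Definition quasicoherent (A : nuAlgebra) (M : lmodule A) : Prop :=
  forall xi : M, exists a : A, xi = act a xi.

Definition fin_gen (A : nuAlgebra) (M : lmodule A) : Prop :=
  exists (n : nat) (g : 'I_n -> M),
    forall m : M, exists (c : 'I_n -> CC) (a : 'I_n -> A),
      m = \sum_(k < n) (c k *: g k + act (a k) (g k)).

Definition coherent (A : nuAlgebra) (M : lmodule A) : Prop :=
  quasicoherent M /\ fin_gen M.

Definition is_hom (A : nuAlgebra) (M N : lmodule A) (f : M -> N) : Prop :=
  [/\ forall x y, f (x + y) = f x + f y,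
      forall (c : CC) x, f (c *: x) = c *: f x &
      forall (a : A) x, f (act a x) = act a (f x)].

Definition finite_dim_Hom (A : nuAlgebra) (M N : lmodule A) : Prop :=
  exists (n : nat) (h : 'I_n -> (M -> N)),
    (forall k, is_hom (h k)) /\
    forall f : M -> N, is_hom f ->
      exists c : 'I_n -> CC, forall x, f x = \sum_(k < n) c k *: h k x.

From Pilot Require Import Defs.
From mathcomp Require Import all_boot all_order all_algebra.
From Stdlib Require Import Classical.
Set Implicit Arguments. Unset Strict Implicit. Unset Printing Implicit Defensive.
Import GRing.Theory.
Local Open Scope ring_scope.

(* Let (e_i) be the AUF family. If N is coherent, each e_i N is finite
   dimensional: for a generator h of N write h = b h with b = sum_p b_p and
   b_p in a corner e_j A e_j', so that e_i A h lies in the finite sum of the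
   finite-dimensional spaces (e_i A e_j) (b_p h).  If M is coherent with
   generators g_k = a_k g_k, then every homomorphism f satisfies
   f g_k = a_k (f g_k), and decomposing a_k into corners puts f g_k in a finite
   sum of spaces e_i N.  As f is determined by the f g_k, the evaluation map
   embeds Hom(M, N) into a finite-dimensional subspace of N^n. *)

Section Span.
Variable V : lmodType CC.
Implicit Types (s : seq V) (S T : V -> Prop).

Inductive in_span s : V -> Prop :=
| span0 : in_span s 0
| span_mem x : x \in s -> in_span s x
| spanD x y : in_span s x -> in_span s y -> in_span s (x + y)
| spanZ (a : CC) x : in_span s x -> in_span s (a *: x).

Definition fin_spanned S := exists s, forall x, S x -> in_span s x.

Definition lin_closed S := forall (a : CC) x y, S x -> S y -> S (a *: x + y).

Lemma in_span_subset s s' x : {subset s <= s'} -> in_span s x -> in_span s' x.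
Proof. by move=> ss'; elim=> [|y /ss'|y z _ Hy _ Hz|a y _ Hy]; constructor. Qed.

Lemma in_span_sum s n (F : 'I_n -> V) :
  (forall k, in_span s (F k)) -> in_span s (\sum_(k < n) F k).
Proof. by move=> sF; apply: (big_ind (in_span s)) => //; [exact: span0|exact: spanD]. Qed.

Lemma in_span_nil x : in_span [::] x -> x = 0.
Proof. by elim=> [|y|y z _ -> _ ->|a y _ ->] //; rewrite ?addr0 ?scaler0. Qed.

Lemma in_span_cons w s x :
  in_span (w :: s) x -> exists (d : CC) y, in_span s y /\ x = d *: w + y.
Proof.
elim=> [|y|y z _ [d1 [y1 [s_y1 ->]]] _ [d2 [y2 [s_y2 ->]]]|a y _ [d [y1 [s_y1 ->]]]].
- by exists 0, 0; split; [exact: span0|rewrite scale0r addr0].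
- rewrite in_cons => /orP[/eqP ->|s_y].
    by exists 1, 0; split; [exact: span0|rewrite scale1r addr0].
  by exists 0, y; split; [exact: span_mem|rewrite scale0r add0r].
- exists (d1 + d2), (y1 + y2); split; first exact: spanD.
  by rewrite scalerDl addrACA.
- exists (a * d), (a *: y1); split; first exact: spanZ.
  by rewrite scalerDr scalerA.
Qed.

Lemma fin_spanned_sub S T : (forall x, S x -> T x) -> fin_spanned T -> fin_spanned S.
Proof. by move=> ST [s sT]; exists s => x /ST/sT. Qed.

Lemma finite_dim_fin_spanned S : finite_dim S -> fin_spanned S.
Proof.
move=> [n [v Sv]]; exists [seq v k | k <- enum 'I_n] => x /Sv[c ->].
by apply: in_span_sum => k; apply/spanZ/span_mem/map_f; rewrite mem_enum.
Qed.

Lemma fin_spanned_sum n (S : 'I_n -> V -> Prop) :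
  (forall k, fin_spanned (S k)) ->
  fin_spanned (fun x => exists y : 'I_n -> V, (forall k, S k (y k)) /\ x = \sum_(k < n) y k).
Proof.
move=> /fin_all_exists[s sS]; exists (flatten [seq s k | k <- enum 'I_n]).
move=> _ [y [Sy ->]]; apply: in_span_sum => k.
apply: in_span_subset (sS k _ (Sy k)) => x s_x; apply/flattenP.
by exists (s k) => //; apply: map_f; rewrite mem_enum.
Qed.

Lemma fin_spanned_basis S : lin_closed S -> fin_spanned S ->
  exists r (t : 'I_r -> V), (forall j, S (t j)) /\
    forall x, S x -> exists c : 'I_r -> CC, x = \sum_(j < r) c j *: t j.
Proof.
move=> S_lin [s]; elim: s S S_lin => [|w s IHs] S S_lin sS.
  exists 0, (fun=> 0); split=> [[]//|x /sS/in_span_nil ->].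
  by exists (fun=> 0); rewrite big_ord0.
pose S' x := S x /\ in_span s x.
have S'_lin : lin_closed S'.
  by move=> a x y [Sx s_x] [Sy s_y]; split; [exact: S_lin|apply/spanD/s_y/spanZ].
have [r [t [S't t_span]]] := IHs S' S'_lin (fun x => @proj2 _ _).
have [[x0 [Sx0 s'x0]]|S_in_s] := classic (exists x0, S x0 /\ ~ in_span s x0); last first.
  exists r, t; split=> [j|x Sx]; first by case: (S't j).
  apply: t_span; split=> //; apply: NNPP => s'x; apply: S_in_s; by exists x.
have [d0 [y0 [s_y0 Ex0]]] := in_span_cons (sS _ Sx0).
have d0_neq0 : d0 != 0.
  by apply: contra_notN s'x0 => /eqP d00; rewrite Ex0 d00 scale0r add0r.
(* Eliminating [w] against [x0] puts every element of [S] into [S'] + C x0. *)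
exists r.+1, (fun j => if unlift ord0 j is Some j' then t j' else x0).
split=> [j|x Sx]; first by case: unliftP => [j' _|_] //; case: (S't j').
have [d [y [s_y Ex]]] := in_span_cons (sS _ Sx).
have S'x : S' ((- (d / d0)) *: x0 + x).
  split; first exact: S_lin.
  have -> : - (d / d0) *: x0 + x = - (d / d0) *: y0 + y.
    by rewrite Ex Ex0 scalerDr scalerA mulNr divfK // addrACA scaleNr addNr add0r.
  by apply/spanD/s_y/spanZ.
have [c Ec] := t_span _ S'x.
exists (fun j => if unlift ord0 j is Some j' then c j' else d / d0).
rewrite big_ord_recl unlift_none; under eq_bigr do rewrite liftK.
by rewrite -Ec addrA scaleNr subrr add0r.
Qed.

End Span.

Lemma fin_spanned_image (V W : lmodType CC) (f : V -> W) (S : V -> Prop) :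
  {morph f : x y / x + y} -> scalable f -> fin_spanned S ->
  fin_spanned (fun y => exists x, S x /\ y = f x).
Proof.
move=> fD fZ [s sS]; exists (map f s) => _ [x [/sS s_x ->]].
have f0 : f 0 = 0 by apply: (addrI (f 0)); rewrite -fD !addr0.
elim: s_x => [|y s_y|y z _ Hy _ Hz|a y _ Hy].
- by rewrite f0; exact: span0.
- exact/span_mem/map_f.
- by rewrite fD; exact: spanD.
- by rewrite fZ; exact: spanZ.
Qed.

Lemma fin_spanned_ffun (V : lmodType CC) n (S : 'I_n -> V -> Prop) :
  (forall k, fin_spanned (S k)) ->
  fin_spanned (fun v : {ffun 'I_n -> V} => forall k, S k (v k)).
Proof.
pose delta k (x : V) : {ffun 'I_n -> V} := [ffun k' => if k' == k then x else 0].
have deltaD k : {morph delta k : x y / x + y}.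
  by move=> x y; apply/ffunP => k'; rewrite !ffunE; case: eqP; rewrite ?addr0.
have deltaZ k : scalable (delta k).
  by move=> a x; apply/ffunP => k'; rewrite !ffunE; case: eqP; rewrite ?scaler0.
move=> S_fin; apply: fin_spanned_sub (fin_spanned_sum (fun k =>
  fin_spanned_image (deltaD k) (deltaZ k) (S_fin k))) => v Sv.
exists (fun k => delta k (v k)); split=> [k|]; first by exists (v k).
apply/ffunP => k; rewrite sum_ffunE (bigD1 k) //= ffunE eqxx big1 ?addr0 //.
by move=> k' /negbTE k'k; rewrite ffunE eq_sym k'k.
Qed.

Section Modules.
Variable A : nuAlgebra.

Section Action.
Variable M : lmodule A.

Lemma act0r (a : A) : act a (0 : M) = 0.
Proof. by apply: (addrI (act a 0)); rewrite -actDr !addr0. Qed.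

Lemma act0l (x : M) : act (0 : A) x = 0.
Proof. by apply: (addrI (act 0 x)); rewrite -actDl !addr0. Qed.

Lemma act_sumr (a : A) n (F : 'I_n -> M) :
  act a (\sum_(k < n) F k) = \sum_(k < n) act a (F k).
Proof. exact: (big_morph (act a) (actDr a) (act0r a)). Qed.

Lemma act_suml (x : M) n (F : 'I_n -> A) :
  act (\sum_(k < n) F k) x = \sum_(k < n) act (F k) x.
Proof. by elim/big_rec2: _ => [|k y1 y2 _ <-]; rewrite ?act0l ?actDl. Qed.

End Action.

Variables M N : lmodule A.

Lemma is_hom_lincomb (a : CC) (f g : M -> N) :
  is_hom f -> is_hom g -> is_hom (fun x => a *: f x + g x).
Proof.
case=> fD fZ fA [gD gZ gA]; split.
- by move=> x y; rewrite fD gD scalerDr addrACA.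
- by move=> c x; rewrite fZ gZ scalerDr !scalerA mulrC.
- by move=> b x; rewrite actDr actZr fA gA.
Qed.

Lemma is_hom_sum n (c : 'I_n -> CC) (h : 'I_n -> M -> N) :
  (forall j, is_hom (h j)) -> is_hom (fun x => \sum_(j < n) c j *: h j x).
Proof.
move=> h_hom; split.
- move=> x y; rewrite -big_split; apply: eq_bigr => j _.
  by case: (h_hom j) => hD _ _; rewrite hD scalerDr.
- move=> a x; rewrite scaler_sumr; apply: eq_bigr => j _.
  by case: (h_hom j) => _ hZ _; rewrite hZ !scalerA mulrC.
- move=> a x; rewrite act_sumr; apply: eq_bigr => j _.
  by case: (h_hom j) => _ _ hA; rewrite hA actZr.
Qed.

Section Generators.
Variables (n : nat) (g : 'I_n -> M).
Hypothesis g_gen : forall m : M, exists (c : 'I_n -> CC) (a : 'I_n -> A),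
  m = \sum_(k < n) (c k *: g k + act (a k) (g k)).

Lemma hom_eq0_on_generators (f : M -> N) :
  is_hom f -> (forall k, f (g k) = 0) -> forall x, f x = 0.
Proof.
move=> [fD fZ fA] fg0 x; have [c [a ->]] := g_gen x.
have f0 : f 0 = 0 by apply: (addrI (f 0)); rewrite -fD !addr0.
rewrite (big_morph f fD f0); apply: big1 => k _.
by rewrite fD fZ fA fg0 scaler0 act0r addr0.
Qed.

Lemma finite_dim_Hom_on_generators :
  (forall k, fin_spanned (fun y : N => exists f, is_hom f /\ y = f (g k))) ->
  finite_dim_Hom M N.
Proof.
move=> values_fin.
pose S (v : {ffun 'I_n -> N}) := exists f, is_hom f /\ v = [ffun k => f (g k)].
have S_lin : lin_closed S.
  move=> a _ _ [f [f_hom ->]] [f' [f'_hom ->]].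
  exists (fun x => a *: f x + f' x); split; first exact: is_hom_lincomb.
  by apply/ffunP => k; rewrite !ffunE.
have S_fin : fin_spanned S.
  apply: fin_spanned_sub (fin_spanned_ffun values_fin) => _ [f [f_hom ->]] k.
  by exists f; rewrite ffunE.
have [r [t [St t_span]]] := fin_spanned_basis S_lin S_fin.
have [h h_t] := fin_all_exists St.
exists r, h; split=> [j|f f_hom]; first by case: (h_t j).
have [c Ec] := t_span _ (ex_intro _ f (conj f_hom erefl)).
pose D x := (-1) *: (\sum_(j < r) c j *: h j x) + f x.
have D_hom : is_hom D.
  by apply: is_hom_lincomb => //; apply: is_hom_sum => j; case: (h_t j).
have D_g0 k : D (g k) = 0.
  have := congr1 (fun v : {ffun 'I_n -> N} => v k) Ec; rewrite /= ffunE sum_ffunE /D => ->.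
  apply/eqP; rewrite scaleN1r addrC subr_eq0; apply/eqP/eq_bigr => j _.
  by case: (h_t j) => _ ->; rewrite !ffunE.
exists c => x; apply/eqP; rewrite -subr_eq0 addrC -scaleN1r; apply/eqP.
exact: hom_eq0_on_generators D_hom D_g0 x.
Qed.

End Generators.
End Modules.

Section AUF.
Variables (A : nuAlgebra) (I : Type) (e : I -> A).
Hypothesis e_idem : forall i, Defs.idempotent (e i).
Hypothesis corner_fin : forall i j, finite_dim (corner (e i) (e j)).
Hypothesis corner_decomp : forall x : A,
  exists (n : nat) (ij : 'I_n -> I * I) (y : 'I_n -> A),
    (forall k, corner (e (ij k).1) (e (ij k).2) (y k)) /\ x = \sum_(k < n) y k.

Lemma corner_idl i j y : corner (e i) (e j) y -> amul (e i) y = y.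
Proof. by move=> [a ->]; rewrite !amulA e_idem. Qed.

Variable N : lmodule A.

Lemma corner_act_fin_spanned i j (z : N) :
  fin_spanned (fun x => exists u, corner (e i) (e j) u /\ x = act u z).
Proof.
apply: fin_spanned_image (finite_dim_fin_spanned (corner_fin i j)).
- by move=> u v; rewrite actDl.
- by move=> c u; rewrite actZl.
Qed.

Lemma left_ideal_act_fin_spanned i (z : N) : (exists b, z = act b z) ->
  fin_spanned (fun x => exists w, x = act (amul (e i) w) z).
Proof.
move=> [b Ez]; have [n [ij [y [y_corner Eb]]]] := corner_decomp b.
apply: fin_spanned_sub (fin_spanned_sum (fun p =>
  corner_act_fin_spanned i (ij p).1 (act (y p) z))) => _ [w ->].
exists (fun p => act (amul (amul (e i) w) (e (ij p).1)) (act (y p) z)).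
split=> [p|]; first by eexists; split; first by exists w.
rewrite {1}Ez Eb act_suml act_sumr; apply: eq_bigr => p _.
by rewrite [RHS]actA -(actA (e _) (y p)) (corner_idl (y_corner p)).
Qed.

Lemma idempotent_act_fin_spanned i : coherent N ->
  fin_spanned (fun x => exists y : N, x = act (e i) y).
Proof.
move=> [N_qc [n [h h_gen]]]; apply: fin_spanned_sub (fin_spanned_sum (fun k =>
  left_ideal_act_fin_spanned i (N_qc (h k)))) => _ [y ->].
have [c [a ->]] := h_gen y.
exists (fun k => act (amul (e i) (c k *: e i + a k)) (h k)); split.
  by move=> k; eexists.
rewrite act_sumr; apply: eq_bigr => k _.
by rewrite amulDr amulZr e_idem actDl actZl actDr actZr actA.
Qed.

Lemma hom_value_fin_spanned (M : lmodule A) (g : M) :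
  coherent N -> (exists a, g = act a g) ->
  fin_spanned (fun y : N => exists f, is_hom f /\ y = f g).
Proof.
move=> N_coh [a Eg]; have [n [ij [y [y_corner Ea]]]] := corner_decomp a.
apply: fin_spanned_sub (fin_spanned_sum (fun l =>
  idempotent_act_fin_spanned (ij l).1 N_coh)) => _ [f [[_ _ fA] ->]].
exists (fun l => act (y l) (f g)); split.
  move=> l; have [u ->] := y_corner l.
  by exists (act (amul u (e (ij l).2)) (f g)); rewrite -actA amulA.
by rewrite {1}Eg fA Ea act_suml.
Qed.

End AUF.

Theorem proposition7p9 (A : nuAlgebra) (M N : lmodule A) :
  AUF A -> coherent M -> coherent N -> finite_dim_Hom M N.
Proof.
move=> [I [e [e_idem _ corner_fin corner_decomp]]] [M_qc [n [g g_gen]]] N_coh.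
apply: (finite_dim_Hom_on_generators g_gen) => k.
exact: (hom_value_fin_spanned e_idem corner_fin corner_decomp N_coh (M_qc (g k))).
Qed.
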